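(* Let $t$ be a normal term, $y$ a $\lambda$-variable, $\sigma=[(a_i:=^*y)_{1\le i\le n}]$ for distinct $\mu$-variables $a_1,\dots,a_n$, and let $\tau$ be the normal form of $t\sigma$. Then $t\sigma\triangleright^*_y\tau$.
   Context: $\lambda\mu$-terms: $t::= x\mid \lambda x.t\mid (t\;t)\mid \mu a.t\mid (a\;t)$ over disjoint infinite sets of $\lambda$-variables and $\mu$-variables. Reduction $(\lambda x.u\;v)\triangleright_\beta u[x:=v]$, $(\mu a.u\;v)\triangleright_\mu\mu a.u[a:=^*v]$, where $u[a:=^*v]$ replaces inductively each subterm $(a\;w)$ of $u$ by $(a\;(w\;v))$; a term is normal if it contains no redex. $t[(a_i:=^*y)_{1\le i\le n}]$ replaces inductively each subterm $(a_i\;w)$ by $(a_i\;(w\;y))$. For a $\lambda$-variable $y$, $u\triangleright_{\beta y}v$ (resp. $u\triangleright_{\mu y}v$) means $v$ is obtained from $u$ by contracting one redex of the form $(\lambda z.w\;y)$ (resp. $(\mu b.w\;y)$), i.e. a redex whose argument is the variable $y$; $\triangleright_y$ is the union of $\triangleright_{\beta y}$ and $\triangleright_{\mu y}$, and $\triangleright^*_y$ its reflexive transitive closure. *)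

(* lambda-mu-terms in de Bruijn style with two separate
   index namespaces: lambda-variables (Var) and mu-variables (Name). *)
From Stdlib Require Import Arith List Relations.
Import ListNotations.

Inductive term : Type :=
| Var  : nat -> term
| Lam  : term -> term
| App  : term -> term -> term
| Mu   : term -> term
| Name : nat -> term -> term.   (* (a t) *)

Fixpoint lift_l (c : nat) (t : term) : term :=
  match t with
  | Var x => Var (if c <=? x then S x else x)
  | Lam u => Lam (lift_l (S c) u)
  | App u v => App (lift_l c u) (lift_l c v)
  | Mu u => Mu (lift_l c u)
  | Name a u => Name a (lift_l c u)
  end.

Fixpoint lift_m (c : nat) (t : term) : term :=
  match t with
  | Var x => Var x
  | Lam u => Lam (lift_m c u)
  | App u v => App (lift_m c u) (lift_m c v)
  | Mu u => Mu (lift_m (S c) u)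
  | Name a u => Name (if c <=? a then S a else a) (lift_m c u)
  end.

(* u[x := v] where x is lambda-index k (the binder being removed) *)
Fixpoint subst_l (k : nat) (v : term) (t : term) : term :=
  match t with
  | Var x => if x =? k then v else if k <? x then Var (pred x) else Var x
  | Lam u => Lam (subst_l (S k) (lift_l 0 v) u)
  | App u w => App (subst_l k v u) (subst_l k v w)
  | Mu u => Mu (subst_l k (lift_m 0 v) u)
  | Name a u => Name a (subst_l k v u)
  end.

(* u[a :=* v] where a is mu-index k: each (a w) becomes (a (w v)) *)
Fixpoint subst_m (k : nat) (v : term) (t : term) : term :=
  match t with
  | Var x => Var x
  | Lam u => Lam (subst_m k (lift_l 0 v) u)
  | App u w => App (subst_m k v u) (subst_m k v w)
  | Mu u => Mu (subst_m (S k) (lift_m 0 v) u)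
  | Name a u =>
      if a =? k then Name a (App (subst_m k v u) v) else Name a (subst_m k v u)
  end.

(* t[(a_i :=* y)_{i}] with A = [a_1; ...; a_n] (free mu-variables)
   and y a free lambda-variable *)
Fixpoint msubst_y (A : list nat) (y : nat) (t : term) : term :=
  match t with
  | Var x => Var x
  | Lam u => Lam (msubst_y A (S y) u)
  | App u w => App (msubst_y A y u) (msubst_y A y w)
  | Mu u => Mu (msubst_y (map S A) y u)
  | Name a u =>
      if existsb (Nat.eqb a) A then Name a (App (msubst_y A y u) (Var y))
      else Name a (msubst_y A y u)
  end.

Inductive red1 : term -> term -> Prop :=
| r_beta : forall u v, red1 (App (Lam u) v) (subst_l 0 v u)
| r_mu : forall u v, red1 (App (Mu u) v) (Mu (subst_m 0 (lift_m 0 v) u))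
| r_lam : forall u u', red1 u u' -> red1 (Lam u) (Lam u')
| r_appl : forall u u' v, red1 u u' -> red1 (App u v) (App u' v)
| r_appr : forall u v v', red1 v v' -> red1 (App u v) (App u v')
| r_mub : forall u u', red1 u u' -> red1 (Mu u) (Mu u')
| r_name : forall a u u', red1 u u' -> red1 (Name a u) (Name a u').

(* red1_y y : contract one redex whose argument is the free lambda-variable y
   (its de Bruijn index is incremented when going under a lambda binder) *)
Inductive red1_y : nat -> term -> term -> Prop :=
| ry_beta : forall y u, red1_y y (App (Lam u) (Var y)) (subst_l 0 (Var y) u)
| ry_mu : forall y u, red1_y y (App (Mu u) (Var y)) (Mu (subst_m 0 (Var y) u))
| ry_lam : forall y u u', red1_y (S y) u u' -> red1_y y (Lam u) (Lam u')
| ry_appl : forall y u u' v, red1_y y u u' -> red1_y y (App u v) (App u' v)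
| ry_appr : forall y u v v', red1_y y v v' -> red1_y y (App u v) (App u v')
| ry_mub : forall y u u', red1_y y u u' -> red1_y y (Mu u) (Mu u')
| ry_name : forall y a u u', red1_y y u u' -> red1_y y (Name a u) (Name a u').

Definition red (t u : term) : Prop := clos_refl_trans term red1 t u.
Definition red_y (y : nat) (t u : term) : Prop := clos_refl_trans term (red1_y y) t u.

Fixpoint normal (t : term) : Prop :=
  match t with
  | Var _ => True
  | Lam u => normal u
  | Mu u => normal u
  | Name _ u => normal u
  | App u v =>
      match u with
      | Lam _ => False
      | Mu _ => False
      | _ => normal u /\ normal v
      end
  end.

(* Every redex of t[(a_i :=* y)] has argument y: since t is normal, each
   application in it either receives the argument y introduced by the
   substitution or has a head that is a variable or a named term, applied to
   arguments.  Such "neutral" heads stay neutral under reduction and under the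
   substitutions of a y-redex, so this invariant survives every reduction step,
   and any reduction sequence starting from t[(a_i :=* y)] contracts y-redexes
   only. *)

From Stdlib Require Import List Arith Lia Relations.

Fixpoint neutral (t : term) : Prop :=
  match t with
  | Var _ | Name _ _ => True
  | App u _ => neutral u
  | Lam _ | Mu _ => False
  end.

(* Every application has argument [Var y] or a neutral head; [y] is the index
   of the fixed free variable, shifted under lambda binders. *)
Fixpoint y_safe (y : nat) (t : term) : Prop :=
  match t with
  | Var _ => True
  | Lam u => y_safe (S y) u
  | Mu u | Name _ u => y_safe y u
  | App u v => y_safe y u /\ y_safe y v /\ (v = Var y \/ neutral u)
  end.

Lemma normal_App_neutral (u v : term) : normal (App u v) -> neutral u.
Proof.
  revert v; induction u as [| | u1 IH u2 _ | |]; intros v; simpl; try tauto.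
  intros [Hu _]; exact (IH u2 Hu).
Qed.

Lemma normal_App (u v : term) : normal (App u v) -> normal u /\ normal v.
Proof. destruct u; simpl; tauto. Qed.

Lemma neutral_msubst_y (A : list nat) (y : nat) (u : term) :
  neutral u -> neutral (msubst_y A y u).
Proof.
  revert A y; induction u; simpl; intros A y Hu; auto.
  destruct (existsb (Nat.eqb n) A); exact I.
Qed.

Lemma y_safe_msubst_y (A : list nat) (y : nat) (t : term) :
  normal t -> y_safe y (msubst_y A y t).
Proof.
  revert A y; induction t as [x | u IH | u IHu v IHv | u IH | a u IH];
    simpl; intros A y Ht; auto.
  - destruct (normal_App u v Ht) as [Hu Hv].
    repeat split; auto.
    right; apply neutral_msubst_y, (normal_App_neutral u v Ht).
  - destruct (existsb (Nat.eqb a) A); simpl; auto.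
Qed.

Lemma neutral_subst_l (k : nat) (v u : term) :
  neutral v -> neutral u -> neutral (subst_l k v u).
Proof.
  intros Hv; induction u as [n | | u1 IH u2 _ | |]; simpl; intros Hu; auto.
  destruct (n =? k); [exact Hv|]; destruct (k <? n); exact I.
Qed.

Lemma neutral_subst_m (k : nat) (v u : term) :
  neutral u -> neutral (subst_m k v u).
Proof.
  induction u as [| | u1 IH u2 _ | | a u _]; simpl; intros Hu; auto.
  destruct (a =? k); exact I.
Qed.

Lemma neutral_red1_y (y : nat) (u u' : term) :
  red1_y y u u' -> neutral u -> neutral u'.
Proof. induction 1; simpl; tauto. Qed.

Lemma y_safe_subst_l (u : term) (k j : nat) :
  k <= j -> y_safe (S j) u -> y_safe j (subst_l k (Var j) u).
Proof.
  revert k j; induction u as [n | u IH | u IHu v IHv | u IH | a u IH];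
    simpl; intros k j Hkj Hu.
  - destruct (n =? k); [exact I|]; destruct (k <? n); exact I.
  - apply IH; [lia | exact Hu].
  - destruct Hu as [Hu [Hv [-> | Hn]]]; repeat split; auto.
    + left; cbn [subst_l].
      destruct (Nat.eqb_spec (S j) k); [lia|].
      destruct (Nat.ltb_spec k (S j)); [reflexivity | lia].
    + right; apply neutral_subst_l; [exact I | exact Hn].
  - apply IH; assumption.
  - apply IH; assumption.
Qed.

Lemma y_safe_subst_m (u : term) (k y : nat) :
  y_safe y u -> y_safe y (subst_m k (Var y) u).
Proof.
  revert k y; induction u as [| u IH | u IHu v IHv | u IH | a u IH];
    simpl; intros k y Hu; auto.
  - destruct Hu as [Hu [Hv [-> | Hn]]]; repeat split; auto.
    right; apply neutral_subst_m, Hn.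
  - destruct (a =? k); simpl; auto.
Qed.

(* The head of a redex is an abstraction or a mu, which is not neutral. *)
Lemma red1_y_of_y_safe (y : nat) (t t' : term) :
  red1 t t' -> y_safe y t -> red1_y y t t'.
Proof.
  intros Hred; revert y; induction Hred; simpl; intros y Ht.
  - destruct Ht as [_ [_ [-> | []]]]; constructor.
  - destruct Ht as [_ [_ [-> | []]]]; constructor.
  - constructor; auto.
  - constructor; apply IHHred, Ht.
  - constructor; apply IHHred, Ht.
  - constructor; auto.
  - constructor; auto.
Qed.

Lemma y_safe_red1_y (y : nat) (t t' : term) :
  red1_y y t t' -> y_safe y t -> y_safe y t'.
Proof.
  induction 1 as [y u | y u | | y u u' v Hred IH | y u v v' Hred IH | |];
    simpl; intros Ht; auto.
  - apply y_safe_subst_l; [lia | exact (proj1 Ht)].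
  - apply y_safe_subst_m, (proj1 Ht).
  - destruct Ht as [Hu [Hv Hh]]; repeat split; auto.
    destruct Hh as [-> | Hn]; [left; reflexivity | right].
    exact (neutral_red1_y y u u' Hred Hn).
  - destruct Ht as [Hu [Hv [-> | Hn]]]; repeat split; auto.
    inversion Hred.
Qed.

Lemma red_y_of_y_safe (y : nat) (t u : term) :
  y_safe y t -> red t u -> red_y y t u.
Proof.
  intros Ht Hred; apply clos_rt_rt1n in Hred.
  induction Hred as [t | t t1 u Hstep _ IH].
  - apply rt_refl.
  - pose proof (red1_y_of_y_safe y t t1 Hstep Ht) as Hstep_y.
    apply rt_trans with t1; [apply rt_step, Hstep_y |].
    exact (IH (y_safe_red1_y y t t1 Hstep_y Ht)).
Qed.

Theorem mainTheorem18 :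
  forall (t : term) (y : nat) (A : list nat) (tau : term),
    normal t -> NoDup A ->
    normal tau -> red (msubst_y A y t) tau ->
    red_y y (msubst_y A y t) tau.
Proof.
  intros t y A tau Ht _ _ Hred.
  apply red_y_of_y_safe; [apply y_safe_msubst_y, Ht | exact Hred].
Qed.
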